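(* Let $1\le n\le L$. If $p_i=p$ and $q_i=q$ for all $i$, then $$Z_{L,n}=\binom{L-1}{n-1}\,[n]_{p,q}^{\,L-n},\qquad\text{where } [n]_{p,q}=p^{n-1}+p^{n-2}q+\cdots+pq^{n-2}+q^{n-1}.$$
   Context: Particle labels are taken modulo $n$. $\Omega_{L,n}$ is the set of words $w_1\cdots w_L$ on the ring $\mathbb{Z}/L\mathbb{Z}$ over the alphabet $\{\bullet_1,\dots,\bullet_n,\Box_1,\dots,\Box_n\}$ in which each $\bullet_k$ occurs exactly once, the $\bullet_1,\dots,\bullet_n$ appear in this cyclic order, and the remaining $L-n$ letters are arbitrary $\Box_i$'s. For $w\in\Omega_{L,n}$ let $b_k$ be the position of $\bullet_k$ and $C_k$ the set of positions strictly between $b_k$ and $b_{k+1}$ going cyclically forward ($b_{n+1}=b_1$). For $i,k\in\{1,\dots,n\}$ set $w_\Box(i,k)=p_1\cdots p_{i-1}q_{i+1}\cdots q_kp_{k+1}\cdots p_n$ if $i\le k$ and $w_\Box(i,k)=q_1\cdots q_kp_{k+1}\cdots p_{i-1}q_{i+1}\cdots q_n$ if $k<i$ (empty products are $1$). The weight is $\mathrm{wt}(w)=\prod_{k=1}^n\prod_{j\in C_k}w_\Box(i_j,k)$ where $w_j=\Box_{i_j}$. The restricted partition function is $Z_{L,n}=\sum\mathrm{wt}(w)$, the sum over $w\in\Omega_{L,n}$ with $w_1=\bullet_1$; it is a polynomial in $p_1,\dots,p_n,q_1,\dots,q_n$, and the claim is about its specialization. *)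

From mathcomp Require Import all_boot all_order all_algebra.
Set Implicit Arguments. Unset Strict Implicit. Unset Printing Implicit Defensive.
Import GRing.Theory.
Local Open Scope ring_scope.

(* Conventions: everything is 0-indexed.  Positions of the ring Z/LZ are
   'I_L (position 0 = the paper's position 1); particle labels are 'I_n
   (label 0 = the paper's label 1).  A letter is  inl k  (= bullet_{k+1})
   or  inr i  (= box_{i+1}). *)

Definition letter (n : nat) := ('I_n + 'I_n)%type.
Definition word (L n : nat) := {ffun 'I_L -> letter n}.

(* Words of Omega_{L,n} with w_1 = bullet_1.  Since the first letter is
   bullet_1, "the bullets appear in cyclic order" amounts to: bullet
   labels increase with position. *)
Definition restricted_word (L n : nat) (w : word L n) : bool :=
  [&& [forall j : 'I_L, (val j == 0)%N ==>
          (if w j is inl k then val k == 0 else false)%N],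
      [forall k : 'I_n, #|[set j | w j == inl k]| == 1%N] &
      [forall j1 : 'I_L, forall j2 : 'I_L, forall k1 : 'I_n, forall k2 : 'I_n,
         [&& w j1 == inl k1, w j2 == inl k2 & (j1 < j2)%N] ==> (k1 < k2)%N]].

(* Index k of the block C_k containing position j: the label of the last
   bullet at a position <= j (number of such bullets, minus one). *)
Definition block_of (L n : nat) (w : word L n) (j : 'I_L) : nat :=
  (#|[set j' : 'I_L | (j' <= j)%N & w j' \in [pred a : letter n | if a is inl _ then true else false]]|.-1)%N.

(* w_Box(i,k); k is the (0-indexed) block label, given as a nat < n *)
Definition wbox (R : comNzRingType) (n : nat) (p q : 'I_n -> R) (i : 'I_n) (k : nat) : R :=
  \prod_(m < n | m != i)
     (if (i <= k)%N then (if (i < m <= k)%N then q m else p m)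
      else (if (k < m < i)%N then p m else q m)).

Definition wt (R : comNzRingType) (L n : nat) (p q : 'I_n -> R) (w : word L n) : R :=
  \prod_(j : 'I_L) (if w j is inr i then wbox p q i (block_of w j) else 1).

Definition Zpart (R : comNzRingType) (L n : nat) (p q : 'I_n -> R) : R :=
  \sum_(w : word L n | restricted_word w) wt p q w.

Definition qint (R : comNzRingType) (n : nat) (p q : R) : R :=
  \sum_(i < n) p ^+ (n.-1 - i) * q ^+ i.

(* A restricted word is determined by its set S of bullet positions, which contains the
   first position and has n elements (the bullet labels are then forced: the bullet at a
   position of S is labelled by the rank of that position in S), together with arbitrary
   boxes at the L - n other positions.
   For constant weights, the factor w_Box(i, k) is q^e p^(n-1-e) where e is the cyclic
   distance from i to min(k, n-1) in Z/nZ; as i runs over the labels, so does e, hence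
   every box position contributes [n]_{p,q} whatever its block.  There are
   C(L-1, n-1) admissible sets S. *)

From mathcomp Require Import all_boot all_order all_algebra.
From mathcomp Require Import zify.
Set Implicit Arguments. Unset Strict Implicit. Unset Printing Implicit Defensive.
Import GRing.Theory.
Local Open Scope ring_scope.

Lemma val_subZp n (c i : 'I_n.+1) :
  val (c - i) = (if (i <= c)%N then c - i else c + n.+1 - i)%N.
Proof.
rewrite /= modnDmr; have := ltn_ord c; have := ltn_ord i.
case: ifP => H *; last by rewrite modn_small; lia.
have -> : (c + (n.+1 - i) = c - i + n.+1)%N by lia.
by rewrite modnDr modn_small //; lia.
Qed.

Lemma card_ord_range n a b :
  #|[pred m : 'I_n | a <= m < b]%N| = (minn b n - minn a n)%N.
Proof.
have -> : #|[pred m : 'I_n | a <= m < b]%N| = count (fun m => a <= m < b)%N (iota 0 n).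
  rewrite -val_enum_ord count_map cardE /enum_mem size_filter.
  by rewrite [in RHS](@eq_filter _ _ predT) ?filter_predT.
elim: n => [|n IH]; first by rewrite !minn0.
rewrite -addn1 iotaD count_cat IH /=.
by case: (leqP a n) => ?; case: (ltnP n b) => ? /=; lia.
Qed.

Section ConstantWeights.
Variables (R : comNzRingType) (p q : R).

Lemma prodr_if_const (I : finType) (P C : pred I) :
  \prod_(i | P i) (if C i then q else p) =
  q ^+ #|[predI P & C]| * p ^+ (#|P| - #|[predI P & C]|).
Proof.
rewrite (bigID C) /= -(cardID C P) addKn.
under eq_bigr => i /andP[_ ->] do [].
under [X in _ * X]eq_bigr => i /andP[_ /negPf ->] do [].
rewrite !prodr_const; congr (_ ^+ _ * _ ^+ _); apply: eq_card => i.
by rewrite !inE unfold_in /= andbC.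
Qed.

Lemma wbox_const n k (c i : 'I_n.+1) : val c = minn k n ->
  wbox (fun _ => p) (fun _ => q) i k = q ^+ (c - i)%R * p ^+ (n - (c - i)%R).
Proof.
move=> Ec.
pose C (m : 'I_n.+1) := if (i <= k)%N then (i < m <= k)%N else ~~ (k < m < i)%N.
rewrite /wbox (eq_bigl (predC1 i)) // (eq_bigr (fun m => if C m then q else p)); last first.
  by move=> m _; rewrite /C; case: ifP => //; case: ifP.
rewrite prodr_if_const cardC1 card_ord /=.
set e := #|_|; suff -> : e = val (c - i)%R by []; rewrite {}/e.
have ltin := ltn_ord i; rewrite val_subZp Ec.
have -> : (i <= minn k n)%N = (i <= k)%N by lia.
case: leqP => Hik.
  rewrite (eq_card (B := [pred m : 'I_n.+1 | i.+1 <= m < k.+1]%N)) ?card_ord_range; first lia.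
  by move=> m; rewrite !inE /C Hik -val_eqE /=; lia.
have := cardID C (predC1 i); rewrite cardC1 card_ord.
rewrite (eq_card (A := [predD _ & _]) (B := [pred m : 'I_n.+1 | k.+1 <= m < i]%N)).
  by rewrite card_ord_range /=; lia.
by move=> m; rewrite !inE /C leqNgt Hik -val_eqE /=; lia.
Qed.

Lemma sum_wbox_const n k : \sum_(i < n) wbox (fun _ => p) (fun _ => q) i k = qint n p q.
Proof.
case: n => [|n]; first by rewrite /qint !big_ord0.
pose c : 'I_n.+1 := inord (minn k n).
have Ec : val c = minn k n by rewrite /= inordK // ltnS geq_minr.
rewrite /qint (eq_bigr _ (fun i _ => wbox_const i Ec)).
rewrite (reindex_inj (inv_inj (subKr c))).
by apply: eq_bigr => i _; rewrite subKr mulrC.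
Qed.
End ConstantWeights.

Definition rank_in L (S : {set 'I_L}) (j : 'I_L) : nat := #|[set j' in S | (j' < j)%N]|.

Section RankIn.
Variables (L : nat) (S : {set 'I_L}).

Definition increasing_on (f : 'I_L -> nat) :=
  {in S &, forall j1 j2 : 'I_L, (j1 < j2)%N -> (f j1 < f j2)%N}.

Lemma increasing_on_inj f : increasing_on f -> {in S &, injective f}.
Proof.
move=> incf j1 j2 S1 S2 E; apply: val_inj; case: (ltngtP j1 j2) => // H.
- by have := incf _ _ S1 S2 H; rewrite E ltnn.
- by have := incf _ _ S2 S1 H; rewrite E ltnn.
Qed.

Lemma rank_in_ltn j : j \in S -> (rank_in S j < #|S|)%N.
Proof.
move=> Sj; apply: proper_card; rewrite properE; apply/andP; split.
  by apply/subsetP => x; rewrite inE => /andP[].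
by apply/subsetPn; exists j => //; rewrite inE ltnn andbF.
Qed.

Lemma rank_in_increasing : increasing_on (rank_in S).
Proof.
move=> j1 j2 S1 _ lt12; apply: proper_card; rewrite properE; apply/andP; split.
  by apply/subsetP => x; rewrite !inE => /andP[-> /ltn_trans]; apply.
by apply/subsetPn; exists j1; rewrite !inE ?S1 ?lt12 // ltnn andbF.
Qed.

Lemma rank_in_onto m : (m < #|S|)%N -> exists2 j, j \in S & rank_in S j = m.
Proof.
move=> ltmS; set s := [seq rank_in S j | j <- enum S].
have uniq_s : uniq s.
  rewrite map_inj_in_uniq ?enum_uniq // => j1 j2; rewrite !mem_enum.
  exact: (increasing_on_inj rank_in_increasing).
have sub_s : {subset s <= iota 0 #|S|}.
  by move=> _ /mapP[j /[!mem_enum] Sj ->]; rewrite mem_iota rank_in_ltn.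
have [|_ Es] := uniq_min_size uniq_s sub_s; first by rewrite size_iota size_map cardE.
have /mapP[j] : m \in s by rewrite Es mem_iota.
by rewrite mem_enum; exists j.
Qed.

Lemma increasing_onto_rank_in n (f : 'I_L -> 'I_n) :
  increasing_on (fun j => f j) -> (forall k, exists2 j, j \in S & f j = k) ->
  {in S, forall j, f j = rank_in S j :> nat}.
Proof.
move=> incf ontof j Sj.
have injf : {in S &, injective f}.
  by move=> j1 j2 S1 S2 /(congr1 val); apply: increasing_on_inj incf j1 j2 S1 S2.
rewrite /rank_in -(card_in_imset (f := f)); last first.
  by move=> ? ? /setIdP[? _] /setIdP[? _]; apply: injf.
have -> : f @: [set j' in S | (j' < j)%N] = [set k : 'I_n | (k < f j)%N].
  apply/setP => k; rewrite inE; apply/imsetP/idP => [[j'] /setIdP[S' lt'] ->|ltk].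
    exact: incf.
  have [j' S' Ek] := ontof k; exists j' => //; rewrite inE S' /=.
  case: (ltngtP j' j) => // H; first by move: ltk; rewrite -Ek ltnNge ltnW // incf.
  by move: ltk; rewrite -Ek (val_inj H) ltnn.
rewrite (eq_card (B := [pred k : 'I_n | 0 <= k < f j]%N)) ?card_ord_range.
  by have := ltn_ord (f j); lia.
by move=> k; rewrite !inE.
Qed.
End RankIn.

Definition is_bullet n (a : letter n) : bool := if a is inl _ then true else false.

Definition bullets L n (w : word L n) : {set 'I_L} := [set j | is_bullet (w j)].

Definition rank_labelled L n (S : {set 'I_L}) (j : 'I_L) (a : letter n) : bool :=
  if a is inl k then (j \in S) && (k == rank_in S j :> nat) else j \notin S.

Lemma bullets_rank_labelled L n (S : {set 'I_L}) (w : word L n) :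
  w \in family (rank_labelled S) -> bullets w = S.
Proof.
move=> /familyP fam; apply/setP => j; rewrite inE.
by move: (fam j); rewrite /rank_labelled; case: (w j) => [k /andP[->]|i /negPf ->].
Qed.

Lemma restricted_word_rank_labelled L n (w : word L.+1 n) : restricted_word w ->
  [/\ ord0 \in bullets w, #|bullets w| = n & w \in family (rank_labelled (bullets w))].
Proof.
case/and3P => /forallP first0 /forallP once /forallP incr; set S := bullets w.
have [k0 w0] : exists k0, w ord0 = inl k0.
  by move: (implyP (first0 ord0) (eqxx _)); case: (w ord0) => // k0 _; exists k0.
pose lab j := if w j is inl k then k else k0.
have incr_lab : increasing_on S (fun j => lab j).
  move=> j1 j2; rewrite !inE /lab.
  case E1: (w j1) => [k1|] //; case E2: (w j2) => [k2|] // _ _ lt12.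
  by have /forallP/(_ j2)/forallP/(_ k1)/forallP/(_ k2) := incr j1; rewrite E1 E2 !eqxx lt12.
have onto_lab k : exists2 j, j \in S & lab j = k.
  have /cards1P [j Ej] := once k.
  have /[!inE] /eqP Ewj : j \in [set j | w j == inl k] by rewrite Ej set11.
  by exists j; rewrite ?inE /lab Ewj.
have inj_lab : {in S &, injective lab}.
  by move=> j1 j2 S1 S2 /(congr1 val); apply: increasing_on_inj incr_lab j1 j2 S1 S2.
split.
- by rewrite inE w0.
- have img_lab : lab @: S = [set: 'I_n].
    by apply/setP => k; rewrite inE; apply/imsetP; have [j Sj <-] := onto_lab k; exists j.
  by rewrite -(card_in_imset inj_lab) img_lab cardsT card_ord.
- apply/familyP => j; rewrite unfold_in /rank_labelled inE; case E: (w j) => [k|i] //=.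
  have <- : lab j = k by rewrite /lab E.
  by rewrite (increasing_onto_rank_in incr_lab onto_lab) ?inE ?E.
Qed.

Lemma rank_labelled_restricted_word L n (S : {set 'I_L.+1}) (w : word L.+1 n) :
  ord0 \in S -> #|S| = n -> w \in family (rank_labelled S) -> restricted_word w.
Proof.
move=> S0 cardS /familyP fam.
have bulletE j k : (w j == inl k) = (j \in S) && (k == rank_in S j :> nat).
  move: (fam j); rewrite unfold_in /rank_labelled.
  by case: (w j) => [k' /andP[-> /eqP <-]|i /negPf ->] //=; rewrite eq_sym.
apply/and3P; split.
- apply/forallP => j; apply/implyP => /eqP j0; have -> : j = ord0 by apply: val_inj.
  move: (fam ord0); rewrite unfold_in /rank_labelled.
  case: (w ord0) => [k /andP[_ /eqP Ek]|i]; last by rewrite S0.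
  by rewrite /= Ek; apply/eqP/eq_card0 => j'; rewrite !inE ltn0 andbF.
- apply/forallP => k; apply/cards1P.
  have ltkS : (k < #|S|)%N by rewrite cardS.
  have [j Sj Ej] := rank_in_onto ltkS.
  exists j; apply/setP => j'; rewrite !inE bulletE.
  apply/andP/eqP => [[Sj' /eqP Ek]|->]; last by rewrite Sj Ej.
  by apply: (increasing_on_inj (rank_in_increasing (S := S)) Sj' Sj); rewrite -Ek Ej.
- apply/forallP => j1; apply/forallP => j2; apply/forallP => k1; apply/forallP => k2.
  rewrite !bulletE; apply/implyP => /and3P[/andP[S1 /eqP ->] /andP[S2 /eqP ->] lt12].
  exact: (rank_in_increasing (S := S)).
Qed.

Definition bullet_block L (S : {set 'I_L}) (j : 'I_L) : nat :=
  (#|[set j' in S | (j' <= j)%N]|).-1.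

Lemma block_ofE L n (w : word L n) : block_of w =1 bullet_block (bullets w).
Proof.
move=> j; rewrite /block_of /bullet_block; congr (_.-1)%N.
by apply: eq_card => j'; rewrite !inE andbC.
Qed.

Lemma sum_wt_rank_labelled (R : comNzRingType) (p q : R) L n (S : {set 'I_L}) :
  #|S| = n ->
  \sum_(w in family (rank_labelled S)) wt (fun _ : 'I_n => p) (fun _ => q) w =
  qint n p q ^+ (L - n).
Proof.
move=> cardS.
pose F j (a : letter n) :=
  if a is inr i then wbox (fun _ => p) (fun _ => q) i (bullet_block S j) else 1.
transitivity (\sum_(w in family (rank_labelled S)) \prod_j F j (w j)).
  apply: eq_bigr => w /bullets_rank_labelled Sw; apply: eq_bigr => j _.
  by rewrite /F block_ofE Sw; case: (w j).
rewrite -bigA_distr_big_dep (bigID (mem S)) /=.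
rewrite big1 ?mul1r => [|j Sj]; last first.
  rewrite big_sumType /= [X in _ + X]big_pred0 => [|i]; last by rewrite Sj.
  have ltjS := rank_in_ltn Sj; rewrite cardS in ltjS.
  rewrite addr0 (big_pred1 (Ordinal ltjS)) // => k.
  by rewrite Sj /= -val_eqE.
rewrite (eq_bigr (fun _ => qint n p q)) => [|j Sj].
  rewrite prodr_const (eq_card (B := [predC S])) //; congr (_ ^+ _).
  by have := cardC S; rewrite card_ord cardS => E; rewrite -[in RHS]E addKn.
rewrite big_sumType /= big_pred0 => [|k]; last by apply: contraNF Sj => /andP[].
rewrite add0r -(sum_wbox_const p q n (bullet_block S j)).
by apply: eq_bigl => i; rewrite unfold_in /= Sj.
Qed.

Lemma card_draws_mem (T : finType) (x : T) k :
  #|[set A : {set T} | (x \in A) && (#|A| == k.+1)]| = 'C(#|T|.-1, k).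
Proof.
set D := [set A : {set T} | _].
have inj_D : {in D &, injective (fun A => A :\ x)}.
  by move=> A B /setIdP[Ax _] /setIdP[Bx _] E; rewrite -(setD1K Ax) -(setD1K Bx) E.
rewrite -(card_in_imset inj_D) -(cardsC1 x) -cards_draws.
apply: eq_card => B; rewrite !inE; apply/imsetP/andP.
  case=> A /setIdP[Ax /eqP cardA] ->.
  split; first by apply/subsetP => y /[!inE] /andP[].
  by move: cardA; rewrite (cardsD1 x) Ax add1n => -[->].
case=> subB /eqP cardB.
have xB : x \notin B by apply/negP => /(subsetP subB); rewrite !inE eqxx.
exists (x |: B); last by rewrite setU1K.
by rewrite !inE eqxx cardsU1 xB cardB /= add1n.
Qed.

Theorem proposition4p9 (R : comNzRingType) (L n : nat) (p q : R) :
  (1 <= n)%N -> (n <= L)%N ->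
  Zpart L (fun _ : 'I_n => p) (fun _ : 'I_n => q) =
  ('C(L.-1, n.-1))%:R * qint n p q ^+ (L - n).
Proof.
case: n => [|n] // _; case: L => [|L] // _.
pose admissible (S : {set 'I_L.+1}) := (ord0 \in S) && (#|S| == n.+1).
rewrite /Zpart (partition_big (@bullets _ _) admissible); last first.
  by move=> w /restricted_word_rank_labelled[S0 cardS _]; rewrite /admissible S0 cardS eqxx.
rewrite (eq_bigr (fun _ => qint n.+1 p q ^+ (L.+1 - n.+1))) => [|S /andP[S0 /eqP cardS]].
  have := card_draws_mem (ord0 : 'I_L.+1) n; rewrite card_ord /= => <-.
  by rewrite sumr_const mulr_natl; congr (_ *+ _); apply: eq_card => S; rewrite inE.
rewrite -(sum_wt_rank_labelled p q cardS); apply: eq_bigl => w.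
apply/andP/idP => [[/restricted_word_rank_labelled[_ _ fam] /eqP <-] //|fam].
by rewrite (bullets_rank_labelled fam) eqxx (rank_labelled_restricted_word S0 cardS fam).
Qed.
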